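(* Let $k=\mathbb R$ or $\mathbb C$, let $(V,g)$ be an inner product vector space over $k$, let $f\in\operatorname{End}_k(V)$, and let $\mathcal H_f=\{H_i\}_{i\in I}$ be a family of finite-dimensional $f$-invariant subspaces with $V=\bigoplus_{i\in I}H_i$ and $H_i\subseteq\big[\sum_{j\ne i}H_j\big]^\perp$ for every $i\in I$. Then $f$ is admissible for the Moore-Penrose inverse and $f^+_{\mathcal H_f}=f^\dagger$.
   Context: An inner product is linear in the first argument, conjugate-symmetric and positive definite; $U^\perp=\{v\in V:g(u,v)=0\ \forall u\in U\}$. $V=\bigoplus_{i\in I}H_i$ means the natural map $\bigoplus H_i\to V$ is an isomorphism. $f$ is admissible for the Moore-Penrose inverse if $V=\operatorname{Ker} f\oplus[\operatorname{Ker} f]^\perp=\operatorname{Im} f\oplus[\operatorname{Im} f]^\perp$; its Moore-Penrose inverse $f^\dagger$ is then the linear map equal to $(f|_{[\operatorname{Ker} f]^\perp})^{-1}$ on $\operatorname{Im} f$ and $0$ on $[\operatorname{Im} f]^\perp$. Writing $f_i=f|_{H_i}\in\operatorname{End}_k(H_i)$ (with $H_i$ carrying the restricted inner product), $f_i^\dagger$ denotes its (finite-dimensional) Moore-Penrose inverse, and $f^+_{\mathcal H_f}$ is the unique linear endomorphism of $V$ with $f^+_{\mathcal H_f}|_{H_i}=f_i^\dagger$ for all $i\in I$. *)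

(* k is a numFieldType (R : realType, or R[i] = complex R). *)
From mathcomp Require Import all_boot all_algebra.
From mathcomp Require Import reals complex.
From Stdlib Require List.
Set Implicit Arguments. Unset Strict Implicit. Unset Printing Implicit Defensive.
Import GRing.Theory Num.Theory.
Local Open Scope ring_scope.

Section InnerProductSpaces.
Variables (k : numFieldType) (conj : k -> k) (V : lmodType k).

(* g is an inner product: linear in the first argument, conjugate-symmetric,
   positive definite (for k = C, "0 < z" in the numField order means z is
   real and positive). *)
Definition is_inner_product (g : V -> V -> k) : Prop :=
  [/\ forall (a : k) (u v w : V), g (a *: u + v) w = a * g u w + g v w,
      forall u v : V, g u v = conj (g v u)
    & forall v : V, v != 0 -> 0 < g v v].

Definition subspace (W : V -> Prop) : Prop :=
  W 0 /\ forall (a : k) (u v : V), W u -> W v -> W (a *: u + v).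

Definition finite_dim (W : V -> Prop) : Prop :=
  exists s : seq V, (forall i : 'I_(size s), W s`_i) /\
    forall v, W v -> exists c : 'I_(size s) -> k, v = \sum_(i < size s) c i *: s`_i.

Definition invariant (f : V -> V) (W : V -> Prop) : Prop :=
  forall v, W v -> W (f v).

Definition orth (g : V -> V -> k) (U : V -> Prop) : V -> Prop :=
  fun v => forall u, U u -> g u v = 0.

(* The natural map (+)_i H_i -> V sends a finitely supported family h
   (h i in H i) to its sum.  [dsum_rel h v] : h is finitely supported and
   sums to v. *)
Definition dsum_rel (I : Type) (h : I -> V) (v : V) : Prop :=
  exists J : seq I, [/\ List.NoDup J, (forall i, ~ List.In i J -> h i = 0)
                      & v = \sum_(i <- J) h i].

(* V = (+)_{i in I} H_i : the natural map is bijective (it is linear). *)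
Definition is_direct_sum (I : Type) (H : I -> V -> Prop) : Prop :=
  (forall v, exists h : I -> V, (forall i, H i (h i)) /\ dsum_rel h v) /\
  (forall (h1 h2 : I -> V) (v : V), (forall i, H i (h1 i)) -> (forall i, H i (h2 i)) ->
      dsum_rel h1 v -> dsum_rel h2 v -> h1 = h2).

Definition sum_except (I : Type) (H : I -> V -> Prop) (i : I) : V -> Prop :=
  fun w => exists (J : seq I) (h : I -> V),
    [/\ ~ List.In i J, forall j, List.In j J -> H j (h j) & w = \sum_(j <- J) h j].

Definition is_direct_sum2 (A B : V -> Prop) : Prop :=
  (forall v, exists a b, [/\ A a, B b & v = a + b]) /\
  (forall a1 a2 b1 b2, A a1 -> A a2 -> B b1 -> B b2 ->
      a1 + b1 = a2 + b2 -> a1 = a2 /\ b1 = b2).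

Definition ker_on (W : V -> Prop) (f : V -> V) : V -> Prop :=
  fun v => W v /\ f v = 0.
Definition im_on (W : V -> Prop) (f : V -> V) : V -> Prop :=
  fun v => exists w, W w /\ f w = v.
Definition orth_on (g : V -> V -> k) (W U : V -> Prop) : V -> Prop :=
  fun v => W v /\ orth g U v.

Definition setTV : V -> Prop := fun _ => True.

Definition MP_admissible (g : V -> V -> k) (f : V -> V) : Prop :=
  is_direct_sum2 (ker_on setTV f) (orth g (ker_on setTV f)) /\
  is_direct_sum2 (im_on setTV f) (orth g (im_on setTV f)).

(* h (restricted to W) is the Moore-Penrose inverse of f|_W on (W, g|_W):
   h maps W to W, on Im(f|_W) it equals (f|_{[Ker f|_W]^perp})^{-1}, and it
   vanishes on [Im f|_W]^perp (complements taken inside W). *)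
Definition is_MP_inverse_on (g : V -> V -> k) (W : V -> Prop) (f h : V -> V) : Prop :=
  [/\ forall v, W v -> W (h v),
      forall v, im_on W f v ->
        orth_on g W (ker_on W f) (h v) /\ f (h v) = v
    & forall v, orth_on g W (im_on W f) v -> h v = 0].

Definition is_MP_inverse (g : V -> V -> k) (f h : V -> V) : Prop :=
  is_MP_inverse_on g setTV f h.

End InnerProductSpaces.

Definition corollary3p21_claim (k : numFieldType) (conj : k -> k) : Prop :=
  forall (V : lmodType k) (g : V -> V -> k) (f : {linear V -> V})
         (I : Type) (H : I -> V -> Prop),
    is_inner_product conj g ->
    (forall i, subspace (H i)) ->
    (forall i, finite_dim (H i)) ->
    (forall i, invariant f (H i)) ->
    is_direct_sum H ->
    (forall i v, H i v -> orth g (sum_except H i) v) ->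
    MP_admissible g f /\
    (* f^+_{H_f} exists: a linear endomorphism restricting to f_i^dagger on each H_i *)
    (exists fp : {linear V -> V}, forall i, is_MP_inverse_on g (H i) f fp) /\
    (* and f^+_{H_f} = f^dagger *)
    (forall fp : {linear V -> V},
        (forall i, is_MP_inverse_on g (H i) f fp) -> is_MP_inverse g f fp).

From Pilot Require Import Defs.
From mathcomp Require Import all_boot all_algebra.
From mathcomp Require Import reals complex.
From HB Require Import structures.
From Stdlib Require Import Classical IndefiniteDescription.
From Stdlib Require List.
Set Implicit Arguments. Unset Strict Implicit. Unset Printing Implicit Defensive.
Import order.Order.TTheory GRing.Theory Num.Theory.
Local Open Scope ring_scope.

(* Orthogonality of the blocks localises everything.  The kernel of f
   is the sum of the kernels of the f|_{H_i} (the sum of the f H_i is direct)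
   and the image of f is the sum of the f H_i, so a vector of H_i orthogonal,
   inside H_i, to Ker f|_{H_i} (resp. Im f|_{H_i}) is orthogonal to all of
   Ker f (resp. Im f).  Each H_i being finite dimensional, it splits
   orthogonally along Ker f|_{H_i} and along Im f|_{H_i}; summing these
   splittings gives V = Ker f (+) [Ker f]^perp = Im f (+) [Im f]^perp.  The
   Moore-Penrose inverse is characterised by f^dagger v in [Ker f]^perp and
   v - f f^dagger v in [Im f]^perp, and by the same localisation this
   characterisation holds blockwise exactly when it holds globally.  Nothing
   depends on k being R or C: conjugate symmetry only serves to make
   orthogonality a symmetric relation. *)

Lemma sumr_In0 (T : Type) (M : zmodType) (J : seq T) (F : T -> M) :
  (forall j, List.In j J -> F j = 0) -> \sum_(j <- J) F j = 0.
Proof.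
elim: J => [|l J IH] F0; first by rewrite big_nil.
by rewrite big_cons F0 ?add0r ?IH //= => [j Jj|]; [apply: F0; right | left].
Qed.

Lemma sumr_NoDup1 (T : Type) (M : zmodType) (J : seq T) (F : T -> M) j :
  List.NoDup J -> List.In j J -> (forall l, List.In l J -> l <> j -> F l = 0) ->
  \sum_(l <- J) F l = F j.
Proof.
elim: J => [|l J IH] //= /List.NoDup_cons_iff[lJ nd] Jj F0; rewrite big_cons.
have [lj|lj] := classic (l = j).
  subst l; rewrite sumr_In0 ?addr0 // => l' Jl'.
  by apply: F0; [right | move=> l'j; apply: lJ; rewrite -l'j].
have [|jJ] := Jj; first by move/lj.
by rewrite F0 ?add0r ?IH //; [move=> l' Jl'; apply: F0; right | left].
Qed.

Section Subspaces.
Variables (k : numFieldType) (V : lmodType k).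
Implicit Types (W U : V -> Prop) (f : {linear V -> V}).

Lemma subspace0 W : subspace W -> W 0.
Proof. by case. Qed.

Lemma subspaceD W u v : subspace W -> W u -> W v -> W (u + v).
Proof. by case=> _ WP Wu Wv; rewrite -[u]scale1r; apply: WP. Qed.

Lemma subspaceZ W a u : subspace W -> W u -> W (a *: u).
Proof. by case=> W0 WP Wu; rewrite -[_ *: _]addr0; apply: WP. Qed.

Lemma subspaceB W u v : subspace W -> W u -> W v -> W (u - v).
Proof. by move=> sW Wu Wv; rewrite -scaleN1r; apply: subspaceD => //; apply: subspaceZ. Qed.

Lemma subspace_sum W (I : Type) (J : seq I) (F : I -> V) : subspace W ->
  (forall i, List.In i J -> W (F i)) -> W (\sum_(i <- J) F i).
Proof.
move=> sW; elim: J => [|j J IH] WF; first by rewrite big_nil; apply: subspace0.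
rewrite big_cons; apply: subspaceD => //; first by apply: WF; left.
by apply: IH => i Ji; apply: WF; right.
Qed.

Lemma subspaceI W U : subspace W -> subspace U -> subspace (fun x => W x /\ U x).
Proof.
move=> [W0 WP] [U0 UP]; split=> // a u v [Wu Uu] [Wv Uv].
by split; [apply: WP | apply: UP].
Qed.

Lemma subspace_setT : subspace (@setTV _ V).
Proof. by []. Qed.

Lemma subspace_ker W f : subspace W -> subspace (ker_on W f).
Proof.
move=> [W0 WP]; split; first by split; rewrite ?raddf0.
by move=> a u v [Wu fu] [Wv fv]; split; [apply: WP | rewrite linearP fu fv scaler0 addr0].
Qed.

Lemma subspace_im W f : subspace W -> subspace (im_on W f).
Proof.
move=> [W0 WP]; split; first by exists 0; rewrite raddf0.
move=> a _ _ [u [Wu <-]] [v [Wv <-]].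
by exists (a *: u + v); split; [apply: WP | rewrite linearP].
Qed.

Fixpoint seq_span (s : seq V) (u : V) : Prop :=
  if s is x :: s' then exists a u', seq_span s' u' /\ u = a *: x + u' else u = 0.

Lemma subspace_seq_span s : subspace (seq_span s).
Proof.
elim: s => [|x s [span0 spanP]] /=.
  by split=> // a _ _ -> ->; rewrite scaler0 addr0.
split; first by exists 0, 0; rewrite scale0r addr0.
move=> a _ _ [b [u [su ->]]] [c [v [sv ->]]].
exists (a * b + c), (a *: u + v); split; first exact: spanP.
by rewrite scalerDr scalerA scalerDl addrACA.
Qed.

Lemma seq_span_min W s : subspace W -> (forall x, List.In x s -> W x) ->
  forall u, seq_span s u -> W u.
Proof.
move=> sW; elim: s => [|x s IH] Ws u /=; first by move->; apply: subspace0.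
move=> [a [u' [su' ->]]]; apply: subspaceD => //.
  by apply: subspaceZ => //; apply: Ws; left.
by apply: IH => // y sy; apply: Ws; right.
Qed.

Lemma finite_dim_seq_span W : finite_dim W -> exists s, forall v, W v -> seq_span s v.
Proof.
move=> [s [_ Ws]]; exists s => _ /Ws[c ->].
elim: s c {Ws} => [|x s IH] c /=; first by rewrite big_ord0.
by rewrite big_ord_recl; exists (c ord0), (\sum_(i < size s) c (lift ord0 i) *: s`_i).
Qed.

(* Induction on x :: s: either U contains some u0 = c x + w0 with c != 0 and
   w0 in span s, and then u0 together with a spanning list of U /\ span s
   spans U, or U is already contained in span s. *)
Lemma seq_span_subspace_fin s U : subspace U -> (forall u, U u -> seq_span s u) ->
  exists t, (forall x, List.In x t -> U x) /\ (forall u, U u -> seq_span t u).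
Proof.
elim: s U => [|x s IH] U sU Us; first by exists [::].
have [[u0 [c [w0 [Uu0 c0 sw0 def_u0]]]]|] :=
  classic (exists u0 c w0, [/\ U u0, c != 0, seq_span s w0 & u0 = c *: x + w0]).
  have [t [tU Ut]] := IH _ (subspaceI sU (subspace_seq_span s)) (fun u Uu => Uu.2).
  exists (u0 :: t); split; first by move=> z /= [<-|tz] //; case: (tU z tz).
  move=> u Uu; have [a [w [sw def_u]]] := Us u Uu.
  exists (a / c), (u - (a / c) *: u0); split; last by rewrite addrC subrK.
  apply: Ut; split; first by apply: subspaceB => //; apply: subspaceZ.
  have -> : u - (a / c) *: u0 = w - (a / c) *: w0.
    by rewrite def_u def_u0 scalerDr scalerA divfK // opprD addrACA subrr add0r.
  by apply: subspaceB (subspace_seq_span s) sw (subspaceZ _ (subspace_seq_span s) sw0).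
move=> noU; apply: IH => // u Uu; have [a [w [sw def_u]]] := Us u Uu.
have [a0|a0] := eqVneq a 0; first by rewrite def_u a0 scale0r add0r.
by case: noU; exists u, a, w.
Qed.

End Subspaces.

Section InnerProduct.
Variables (k : numFieldType) (conj : k -> k) (V : lmodType k) (g : V -> V -> k).
Hypothesis g_ip : is_inner_product conj g.

Lemma ipDl u v w : g (u + v) w = g u w + g v w.
Proof. by case: g_ip => gP _ _; rewrite -[u in LHS]scale1r gP mul1r. Qed.

Lemma ip0l w : g 0 w = 0.
Proof. by apply: (addrI (g 0 w)); rewrite -ipDl !addr0. Qed.

Lemma ipZl a u w : g (a *: u) w = a * g u w.
Proof. by case: g_ip => gP _ _; rewrite -[a *: u]addr0 gP ip0l addr0. Qed.

Lemma ipBl u v w : g (u - v) w = g u w - g v w.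
Proof. by rewrite ipDl -scaleN1r ipZl mulN1r. Qed.

Lemma ip_suml (I : Type) (J : seq I) (F : I -> V) w :
  g (\sum_(i <- J) F i) w = \sum_(i <- J) g (F i) w.
Proof.
elim: J => [|j J IH]; first by rewrite !big_nil ip0l.
by rewrite !big_cons ipDl IH.
Qed.

Lemma ip_sym0 u v : g u v = 0 -> g v u = 0.
Proof. by case: g_ip => _ g_sym _ guv; rewrite g_sym guv -(ip0l 0) -g_sym ip0l. Qed.

Lemma ip_self_eq0 v : g v v = 0 -> v = 0.
Proof. by case: g_ip => _ _ g_pos gvv; have [//|/g_pos] := eqVneq v 0; rewrite gvv ltxx. Qed.

Lemma subspace_orth U : subspace (orth g U).
Proof.
split=> [u _|a v w ov ow u Uu]; first by apply: ip_sym0; apply: ip0l.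
by apply: ip_sym0; rewrite ipDl ipZl (ip_sym0 (ov u Uu)) (ip_sym0 (ow u Uu)) mulr0 addr0.
Qed.

Lemma orth_self_eq0 U x : U x -> orth g U x -> x = 0.
Proof. by move=> Ux oUx; apply: ip_self_eq0; apply: oUx. Qed.

Lemma is_direct_sum2_orth U : subspace U ->
  (forall v, exists a b, [/\ U a, orth g U b & v = a + b]) ->
  is_direct_sum2 U (orth g U).
Proof.
move=> sU decU; split=> // a1 a2 b1 b2 Ua1 Ua2 ob1 ob2 eq12.
have a12 : a1 - a2 = b2 - b1.
  by apply/eqP; rewrite subr_eq addrAC (addrC b2) -eq12 addrK.
have /subr0_eq ea : a1 - a2 = 0.
  apply: (orth_self_eq0 (U := U)); first exact: subspaceB.
  by rewrite a12; apply: subspaceB (subspace_orth U) ob2 ob1.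
by split=> //; move: eq12; rewrite ea => /addrI.
Qed.

(* One Gram-Schmidt step: project x on span s, then correct the projection of
   v on span s along the residual x'. *)
Lemma orth_proj_seq_span s v :
  exists u, seq_span s u /\ orth g (seq_span s) (v - u).
Proof.
elim: s v => [|x s IH] v; first by exists 0; split=> //= _ ->; rewrite ip0l.
have [u1 [su1 o1]] := IH v; have [u2 [su2 o2]] := IH x.
set w := v - u1; set x' := x - u2; set a := g w x' / g x' x'.
have sS := subspace_seq_span s.
exists (u1 + a *: x'); split.
  exists a, (u1 - a *: u2); split; first by apply: subspaceB sS su1 (subspaceZ _ sS su2).
  by rewrite /x' scalerBr addrCA addrA.
have -> : v - (u1 + a *: x') = w - a *: x' by rewrite opprD addrA.
have o_span y : seq_span s y -> g y (w - a *: x') = 0.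
  move=> sy; apply: ip_sym0.
  by rewrite ipBl ipZl (ip_sym0 (o1 y sy)) (ip_sym0 (o2 y sy)) mulr0 subr0.
have o_x' : g x' (w - a *: x') = 0.
  have [/ip_self_eq0 x'0|x'x'] := eqVneq (g x' x') 0; first by rewrite x'0 ip0l.
  by apply: ip_sym0; rewrite ipBl ipZl divfK // subrr.
move=> _ [b [y [sy ->]]]; rewrite ipDl ipZl (o_span y sy) addr0.
by rewrite -[x](subrK u2) -/x' ipDl o_x' (o_span u2 su2) addr0 mulr0.
Qed.

Lemma fin_dim_orth_decomp W U : subspace W -> finite_dim W -> subspace U ->
  (forall u, U u -> W u) -> forall v, W v ->
  exists a b, [/\ U a, W b, orth g U b & v = a + b].
Proof.
move=> sW fW sU UW v Wv.
have [s Ws] := finite_dim_seq_span fW.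
have [t [tU Ut]] := seq_span_subspace_fin sU (fun u Uu => Ws u (UW u Uu)).
have [u [tu ou]] := orth_proj_seq_span t v.
have Uu : U u := seq_span_min sU tU tu.
exists u, (v - u); split=> //; last by rewrite addrC subrK.
  by apply: subspaceB => //; apply: UW.
by move=> y Uy; apply: ou; apply: Ut.
Qed.

Section MPInverse.
Variable f : {linear V -> V}.
Hypothesis f_adm : MP_admissible g f.

Definition mp_spec (v p : V) : Prop :=
  orth g (ker_on (@setTV _ V) f) p /\ orth g (im_on (@setTV _ V) f) (v - f p).

Lemma mp_spec_exists v : exists p, mp_spec v p.
Proof.
have [[decK _] [decI _]] := f_adm.
have [_ [q [[w [_ <-]] oq ->]]] := decI v.
have [a [p [[_ fa] op ->]]] := decK w.
by exists p; split; rewrite // linearD fa add0r addrAC subrr add0r.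
Qed.

Lemma mp_spec_uniq v p1 p2 : mp_spec v p1 -> mp_spec v p2 -> p1 = p2.
Proof.
move=> [ok1 oi1] [ok2 oi2].
have fp12 : f p1 - f p2 = 0.
  apply: (@orth_self_eq0 (im_on (@setTV _ V) f)); first by exists (p1 - p2); rewrite raddfB.
  have -> : f p1 - f p2 = (v - f p2) - (v - f p1).
    by rewrite opprB (addrC (v - _)) addrA subrK.
  exact: subspaceB (subspace_orth _) oi2 oi1.
apply: subr0_eq; apply: (@orth_self_eq0 (ker_on (@setTV _ V) f)).
  by split; rewrite ?raddfB.
exact: subspaceB (subspace_orth _) ok1 ok2.
Qed.

Definition mp_inv (v : V) : V :=
  proj1_sig (constructive_indefinite_description _ (mp_spec_exists v)).

Lemma mp_invP v : mp_spec v (mp_inv v).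
Proof. exact: proj2_sig (constructive_indefinite_description _ (mp_spec_exists v)). Qed.

Lemma mp_inv_eq v p : mp_spec v p -> mp_inv v = p.
Proof. exact: mp_spec_uniq (mp_invP v). Qed.

Lemma mp_inv_is_linear : linear mp_inv.
Proof.
move=> a u v; apply: mp_inv_eq.
have [ok_u oi_u] := mp_invP u; have [ok_v oi_v] := mp_invP v.
split; first by apply: (subspace_orth _).2.
have -> : a *: u + v - f (a *: mp_inv u + mp_inv v) =
          a *: (u - f (mp_inv u)) + (v - f (mp_inv v)).
  by rewrite linearP opprD addrACA scalerBr.
by apply: (subspace_orth _).2.
Qed.

HB.instance Definition _ := GRing.isLinear.Build k V V *:%R mp_inv mp_inv_is_linear.

End MPInverse.

Section Blocks.
Variables (f : {linear V -> V}) (I : Type) (H : I -> V -> Prop).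
Hypotheses (H_sub : forall i, subspace (H i)) (H_fin : forall i, finite_dim (H i))
  (H_inv : forall i, Defs.invariant f (H i)) (H_dsum : is_direct_sum H)
  (H_orth : forall i v, H i v -> orth g (sum_except H i) v).

Lemma ip_blocks i j x y : i <> j -> H i x -> H j y -> g x y = 0.
Proof.
move=> ij Hx Hy; apply: (H_orth Hy); exists [:: i], (fun _ => x).
by split=> [/= [|]|l /= [<-|]|]; rewrite ?big_seq1.
Qed.

Lemma ip_dsum_block v h J i y : (forall l, H l (h l)) -> List.NoDup J ->
  (forall l, ~ List.In l J -> h l = 0) -> v = \sum_(l <- J) h l -> H i y ->
  g v y = g (h i) y.
Proof.
move=> Hh nd h0 -> Hy; rewrite ip_suml.
have [Ji|Ji] := classic (List.In i J).
  by apply: sumr_NoDup1 => // l _ li; apply: ip_blocks li (Hh l) Hy.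
rewrite h0 // ip0l; apply: sumr_In0 => l Jl; apply: ip_blocks (Hh l) Hy.
by move=> li; apply: Ji; rewrite -li.
Qed.

Lemma ker_dsum_block v h J : (forall l, H l (h l)) -> List.NoDup J ->
  (forall l, ~ List.In l J -> h l = 0) -> v = \sum_(l <- J) h l -> f v = 0 ->
  forall i, f (h i) = 0.
Proof.
move=> Hh nd h0 def_v fv0.
have Hfh l : H l (f (h l)) := H_inv (Hh l).
have dsum_fh : dsum_rel (fun l => f (h l)) 0.
  by exists J; split=> // [l Jl|]; rewrite ?h0 ?raddf0 // -raddf_sum -def_v.
have dsum0 : dsum_rel (fun _ : I => 0 : V) 0.
  by exists [::]; split; rewrite ?big_nil //; apply: List.NoDup_nil.
move=> i; have fh_eq0 := H_dsum.2 _ _ _ Hfh (fun l => subspace0 (H_sub l)) dsum_fh dsum0.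
exact: (congr1 (fun F => F i) fh_eq0).
Qed.

Lemma orth_ker_block i x : H i x -> orth g (ker_on (H i) f) x ->
  orth g (ker_on (@setTV _ V) f) x.
Proof.
move=> Hx ox u [_ fu0]; have [h [Hh [J [nd h0 def_u]]]] := H_dsum.1 u.
rewrite (ip_dsum_block Hh nd h0 def_u Hx); apply: ox.
split; [exact: Hh | exact: (ker_dsum_block Hh nd h0 def_u fu0 i)].
Qed.

Lemma orth_im_block i x : H i x -> orth g (im_on (H i) f) x ->
  orth g (im_on (@setTV _ V) f) x.
Proof.
move=> Hx ox _ [w [_ <-]]; have [h [Hh [J [nd h0 def_w]]]] := H_dsum.1 w.
have Hfh l : H l (f (h l)) := H_inv (Hh l).
have fh0 l : ~ List.In l J -> f (h l) = 0 by move/h0->; rewrite raddf0.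
rewrite def_w raddf_sum (ip_dsum_block Hfh nd fh0 erefl Hx).
by apply: ox; exists (h i).
Qed.

Lemma im_on_block i u : im_on (H i) f u -> H i u.
Proof. by case=> w [Hw <-]; apply: H_inv. Qed.

Lemma orth_decomp_blocks (U : I -> V -> Prop) (Ug : V -> Prop) :
  (forall l, subspace (U l)) -> (forall l u, U l u -> H l u) ->
  subspace Ug -> (forall l u, U l u -> Ug u) ->
  (forall l x, H l x -> orth g (U l) x -> orth g Ug x) ->
  forall v, exists a b, [/\ Ug a, orth g Ug b & v = a + b].
Proof.
move=> sU UH sUg UUg orthUg v; have [h [Hh [J [_ _ ->]]]] := H_dsum.1 v.
have /functional_choice[P PP] : forall l, exists p : V * V,
    [/\ U l p.1, H l p.2, orth g (U l) p.2 & h l = p.1 + p.2].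
  move=> l; have [a [b decl]] := fin_dim_orth_decomp (H_sub l) (H_fin l) (sU l) (UH l) (Hh l).
  by exists (a, b).
exists (\sum_(l <- J) (P l).1), (\sum_(l <- J) (P l).2); split.
- by apply: subspace_sum => // l _; case: (PP l) => /UUg.
- apply: subspace_sum (subspace_orth _) _ => l _.
  by case: (PP l) => _ Hl ol _; apply: orthUg Hl ol.
- by rewrite -big_split; apply: eq_bigr => l _; case: (PP l).
Qed.

Lemma MP_admissible_blocks : MP_admissible g f.
Proof.
have sK := subspace_ker f (@subspace_setT _ V).
have sI := subspace_im f (@subspace_setT _ V).
split; apply: is_direct_sum2_orth => //.
- apply: (orth_decomp_blocks (U := fun l => ker_on (H l) f)) => //.
  + by move=> l; apply: subspace_ker.
  + by move=> l u [].
  + by move=> l u [_ fu].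
  + exact: orth_ker_block.
- apply: (orth_decomp_blocks (U := fun l => im_on (H l) f)) => //.
  + by move=> l; apply: subspace_im.
  + exact: im_on_block.
  + by move=> l _ [w [_ <-]]; exists w.
  + exact: orth_im_block.
Qed.

Local Notation fd := (mp_inv MP_admissible_blocks).

Lemma mp_inv_im_block i v : im_on (H i) f v ->
  [/\ H i (fd v), orth g (ker_on (H i) f) (fd v) & f (fd v) = v].
Proof.
move=> [w [Hw <-]].
have [a [p [[_ fa0] Hp op ->]]] :=
  fin_dim_orth_decomp (H_sub i) (H_fin i) (subspace_ker f (H_sub i)) (fun _ Ku => Ku.1) Hw.
suff -> : fd (f (a + p)) = p by rewrite linearD fa0 add0r.
apply: mp_inv_eq; split; first exact: orth_ker_block Hp op.
by rewrite linearD fa0 add0r subrr; apply: subspace0 (subspace_orth _).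
Qed.

Lemma mp_inv_orth_im_block i v : orth_on g (H i) (im_on (H i) f) v -> fd v = 0.
Proof.
move=> [Hv ov]; apply: mp_inv_eq; split; first exact: subspace0 (subspace_orth _).
by rewrite raddf0 subr0; apply: orth_im_block Hv ov.
Qed.

Lemma mp_inv_block i : is_MP_inverse_on g (H i) f fd.
Proof.
split=> [v Hv|v /mp_inv_im_block[]|]; last exact: mp_inv_orth_im_block.
  have [m [q [Im_m Hq oq ->]]] :=
    fin_dim_orth_decomp (H_sub i) (H_fin i) (subspace_im f (H_sub i)) (@im_on_block i) Hv.
  have -> : fd (m + q) = fd m + fd q := linearD _ m q.
  by rewrite (@mp_inv_orth_im_block i q) ?addr0; [case: (mp_inv_im_block Im_m) | split].
by move=> Hfd ofd ffd; split.
Qed.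

Lemma exists_MP_inverse_blocks :
  exists fp : {linear V -> V}, forall i, is_MP_inverse_on g (H i) f fp.
Proof. by exists fd; apply: mp_inv_block. Qed.

Lemma is_MP_inverse_blocks (fp : {linear V -> V}) :
  (forall i, is_MP_inverse_on g (H i) f fp) -> is_MP_inverse g f fp.
Proof.
move=> fp_blocks; split=> // [_ [w [_ <-]]|v [_ ov]].
  have [h [Hh [J [_ _ ->]]]] := H_dsum.1 w.
  have fp_fh l : orth_on g (H l) (ker_on (H l) f) (fp (f (h l))) /\
                 f (fp (f (h l))) = f (h l).
    by case: (fp_blocks l) => _ fp_im _; apply: fp_im; exists (h l).
  rewrite !raddf_sum; split; last by apply: eq_bigr => l _; case: (fp_fh l).
  split=> //; apply: subspace_sum (subspace_orth _) _ => l _.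
  by case: (fp_fh l) => -[Hl ol] _; apply: orth_ker_block Hl ol.
have [h [Hh [J [nd h0 def_v]]]] := H_dsum.1 v.
rewrite def_v raddf_sum big1 // => l _; case: (fp_blocks l) => _ _; apply; split=> //.
move=> _ [w [Hw <-]]; apply: ip_sym0.
rewrite -(ip_dsum_block Hh nd h0 def_v (H_inv Hw)); apply: ip_sym0.
by apply: ov; exists w.
Qed.

End Blocks.
End InnerProduct.

Lemma corollary3p21_claim_numField (k : numFieldType) (conj : k -> k) :
  corollary3p21_claim conj.
Proof.
move=> V g f I H g_ip H_sub H_fin H_inv H_dsum H_orth; split.
  exact: (MP_admissible_blocks g_ip H_sub H_fin H_inv H_dsum H_orth).
split; first exact: (exists_MP_inverse_blocks g_ip H_sub H_fin H_inv H_dsum H_orth).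
exact: (is_MP_inverse_blocks g_ip H_sub H_inv H_dsum H_orth).
Qed.

Theorem corollary3p21 (R : realType) :
  corollary3p21_claim (fun x : R => x) /\
  corollary3p21_claim (@Num.Def.conjC (R[i] : numClosedFieldType)).
Proof. by split; apply: corollary3p21_claim_numField. Qed.
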